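(* Every open subspace of an $L$-selective space is $L$-selective.
   Context: All spaces are assumed $T_1$. For spaces $Y$, $X$, a map $\varphi:Y\to\mathcal P(X)\setminus\{\emptyset\}$ is lower semicontinuous (l.s.c.) if $\{y:\varphi(y)\cap U\neq\emptyset\}$ is open in $Y$ for every open $U\subseteq X$; a selection is a map $f:Y\to X$ with $f(y)\in\varphi(y)$ for all $y$. $X$ is $Y$-selective if every l.s.c. map from $Y$ to the nonempty closed subsets of $X$ has a continuous selection; $L$-selective means $(\omega+1)$-selective, where $\omega+1$ carries the order topology. *)

From HB Require Import structures.
From mathcomp Require Import all_boot all_order all_algebra.
From mathcomp Require Import all_classical topology subtype_topology separation_axioms.
Set Implicit Arguments. Unset Strict Implicit. Unset Printing Implicit Defensive.
Import Order.TTheory.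
Local Open Scope classical_set_scope.

(* The ordinal omega+1 = {0,1,2,...} \cup {omega}. *)
Inductive omega1 := Fin of nat | Omega.

Definition omega1_to (x : omega1) : option nat :=
  match x with Fin n => Some n | Omega => None end.
Definition omega1_of (o : option nat) : omega1 :=
  match o with Some n => Fin n | None => Omega end.
Lemma omega1_toK : cancel omega1_to omega1_of. Proof. by case. Qed.

HB.instance Definition _ := Countable.copy omega1 (can_type omega1_toK).

Definition omega1_le (x y : omega1) : bool :=
  match x, y with
  | Fin m, Fin n => (m <= n)%N
  | _, Omega => true
  | Omega, Fin _ => false
  end.
Definition omega1_lt (x y : omega1) : bool := (y != x) && omega1_le x y.
Definition omega1_meet (x y : omega1) := if omega1_lt x y then x else y.
Definition omega1_join (x y : omega1) := if omega1_lt x y then y else x.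

Fact omega1_le_anti : antisymmetric omega1_le.
Proof.
by move=> [m|] [n|] //= /andP[a b]; congr Fin; apply/eqP; rewrite eqn_leq a b.
Qed.
Fact omega1_le_trans : transitive omega1_le.
Proof. by move=> [m|] [n|] [p|] //=; apply: leq_trans. Qed.
Fact omega1_le_total : total omega1_le.
Proof. by move=> [m|] [n|] //=; apply: leq_total. Qed.

Fact omega1_disp : Order.disp_t. Proof. exact: Order.Disp tt tt. Qed.

HB.instance Definition _ := Order.isOrder.Build omega1_disp omega1
  (fun _ _ => erefl) (fun _ _ => erefl) (fun _ _ => erefl)
  omega1_le_anti omega1_le_trans omega1_le_total.

Definition L : topologicalType := order_topology omega1.

Definition lsc {Y X : topologicalType} (phi : Y -> set X) : Prop :=
  forall U : set X, open U -> open [set y | phi y `&` U !=set0].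

Definition selective (Y X : topologicalType) : Prop :=
  forall phi : Y -> set X,
    (forall y, closed (phi y) /\ phi y !=set0) -> lsc phi ->
    exists f : Y -> X, continuous f /\ forall y, phi y (f y).

Definition L_selective (X : topologicalType) : Prop := selective L X.

From HB Require Import structures.
From mathcomp Require Import all_boot all_order all_algebra.
From mathcomp Require Import all_classical topology subtype_topology separation_axioms.
Local Open Scope classical_set_scope.

(* Given an l.s.c. map phi from L to the nonempty closed subsets of the open
   set U, fix x0 in phi(omega) and set psi(n) = cl_X phi(n), psi(omega) = {x0}.
   psi is l.s.c. (at omega because phi is) and closed-valued (X is T1), so it
   has a continuous selection g.  As g(omega) = x0 lies in the open set U, g(n)
   is in U for all large n, and then g(n) is in cl_X phi(n) /\ U = phi(n).
   Changing g wherever it leaves U only touches finitely many points, all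
   isolated in L, so the result is still continuous. *)

Lemma lt_Fin (m n : nat) : ((Fin m : L) < Fin n)%O = (m < n)%N.
Proof.
have E : (Fin n == Fin m :> L) = (n == m) by apply/eqP/eqP => [[]|->].
by rewrite /Order.lt /= ltn_neqAle E eq_sym.
Qed.

Lemma open_Fin (n : nat) : open [set Fin n : L].
Proof.
case: n => [|n].
  rewrite (_ : [set _] = `]-oo, (Fin 1 : L)[%classic); first exact: lray_open.
  apply/seteqP; split => [_ -> |[[|m]|]] /=; by rewrite in_itv /= ?lt_Fin.
rewrite (_ : [set _] = `](Fin n : L), Fin n.+2[%classic); first exact: itv_open.
apply/seteqP; split => [_ -> |[m|]] /=; rewrite in_itv /= ?lt_Fin ?ltnS ?leqnn //.
by move=> /andP[nm mn]; congr Fin; apply/eqP; rewrite eqn_leq mn nm.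
Qed.

Lemma cvg_Fin_Omega : Fin @ \oo --> (Omega : L).
Proof.
move=> A; rewrite order_nbhs_itv => -[[l r] [oe Oi] sub].
have {}sub m : (Fin m : L) \in Interval l r -> A (Fin m) by move/sub.
move: oe Oi sub; case: l => [[] [k|]|[]]; case: r => [[] [k'|]|[]] //=;
  rewrite ?in_itv /= => _ // _ sub.
  by exists k.+1 => // m /= km; apply: sub; rewrite in_itv /= andbT lt_Fin.
by exists 0%N => // m _; apply: sub; rewrite in_itv.
Qed.

Lemma L_openP (A : set L) :
  open A <-> (A Omega -> \forall n \near \oo, A (Fin n)).
Proof.
split=> [oA AO|AOn]; first by apply: cvg_Fin_Omega; exact: open_nbhs_nbhs.
rewrite openE => -[n|] An; rewrite /interior.
  by rewrite nbhsE; exists [set Fin n] => [|_ ->] //; split=> //;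
    exact: open_Fin.
have [N _ NA] := AOn An; rewrite nbhsE.
exists `](Fin N : L), +oo[%classic.
  by split; [exact: rray_open|rewrite /= in_itv].
by move=> [m|] //=; rewrite in_itv /= andbT lt_Fin => /ltnW /NA.
Qed.

Lemma L_continuousP {T : topologicalType} (f : L -> T) :
  continuous f <-> f \o Fin @ \oo --> f Omega.
Proof.
split=> [cf|fO]; first exact: cvg_comp cvg_Fin_Omega (cf Omega).
apply/continuousP => A oA; apply/L_openP => AfO.
by apply: fO; exact: open_nbhs_nbhs.
Qed.

Section set_type_topology.
Context {X : topologicalType} {U : set X}.

Lemma open_set_val_preimage {V : set X} :
  open V -> open (set_val @^-1` V : set U).
Proof. by exists V. Qed.

Lemma closed_set_type_closure (C : set U) (x : U) :
  closed C -> closure (set_val @` C) (set_val x) -> C x.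
Proof.
move=> cC clx; apply: cC => B; rewrite nbhsE => -[_ [[V oV <-] Vx] VB].
have [_ [[w Cw <-] Vw]] := clx V (open_nbhs_nbhs (conj oV Vx)).
by exists w; split=> //; exact: VB.
Qed.

Definition closure_lift (phi : L -> set U) (x0 : X) (y : L) : set X :=
  if y is Fin n then closure (set_val @` phi (Fin n)) else [set x0].

Lemma closure_lift_closed_nonempty {phi : L -> set U} (x0 : X) :
  accessible_space X -> (forall y, phi y !=set0) ->
  forall y, closed (closure_lift phi x0 y) /\ closure_lift phi x0 y !=set0.
Proof.
move=> T1 phi_nonempty [n|] /=; last first.
  by split; [exact: accessible_closed_set1|exists x0].
split; first exact: closed_closure.
have [z phiz] := phi_nonempty (Fin n).
by exists (set_val z); apply: subset_closure; exists z.
Qed.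

Lemma lsc_closure_lift {phi : L -> set U} {x0 : U} :
  lsc phi -> phi Omega x0 -> lsc (closure_lift phi (set_val x0)).
Proof.
move=> phi_lsc phix0 V oV; apply/L_openP => -[_ [/= -> Vx0]].
have /L_openP meetV := phi_lsc _ (open_set_val_preimage oV).
have /meetV : (phi Omega `&` set_val @^-1` V) !=set0 by exists x0.
apply: filterS => n [z [phiz Vz]]; exists (set_val z); split=> //.
by apply: subset_closure; exists z.
Qed.

Lemma selection_of_closure_lift {phi : L -> set U} {x0 : U} {g : L -> X} :
  open U -> (forall y, closed (phi y) /\ phi y !=set0) -> phi Omega x0 ->
  continuous g -> (forall y, closure_lift phi (set_val x0) y (g y)) ->
  exists f : L -> U, continuous f /\ forall y, phi y (f y).
Proof.
move=> oU phiP phix0 cg g_sel.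
have [pick phi_pick] := choice (fun y => (phiP y).2).
pose f y :=
  if pselect (U (g y)) is left Ugy then SigSub (mem_set Ugy) else pick y.
have val_f y : U (g y) -> set_val (f y) = g y.
  by rewrite /f; case: pselect.
exists f; split.
  apply: continuous_comp_initial; apply/L_continuousP.
  have gO : g Omega = set_val x0 := g_sel Omega.
  have UgO : U (g Omega) by rewrite gO; exact: set_valP.
  have cg_tail := (L_continuousP g).1 cg.
  have Ug_tail : \forall n \near \oo, U (g (Fin n)).
    by apply: cg_tail; exact: open_nbhs_nbhs.
  rewrite /= val_f //; apply: cvg_trans cg_tail; apply: near_eq_cvg.
  by apply: filterS Ug_tail => n /val_f.
move=> y; rewrite /f; case: pselect => [Ugy|_]; last exact: phi_pick.
case: y Ugy (g_sel y) => [n|] Ugy /= gy.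
  by apply: closed_set_type_closure (phiP _).1 _.
by suff -> : SigSub (mem_set Ugy) = x0 by []; exact: val_inj.
Qed.

End set_type_topology.

Theorem mainTheorem11 (X : topologicalType) (U : set X) :
  accessible_space X -> L_selective X -> open U -> L_selective (set_type U).
Proof.
move=> T1 Xsel oU phi phiP phi_lsc.
have [x0 phix0] := (phiP Omega).2.
have psiP := closure_lift_closed_nonempty (set_val x0) T1 (fun y => (phiP y).2).
have [g [cg g_sel]] := Xsel _ psiP (lsc_closure_lift phi_lsc phix0).
exact: selection_of_closure_lift oU phiP phix0 cg g_sel.
Qed.
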